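(* For $n\ge 2$, the expected number of indices $k\in\{2,\dots,n\}$ such that the $(k-1)$-th and $k$-th boundary steps are both south steps, in a uniformly random type-B permutation tableau of size $n$, equals $\dfrac{2n-1}{24}$.
   Context: A Ferrers diagram is a left-justified array of cells whose row lengths weakly decrease from top to bottom (rows of length $0$ are allowed). Its half-perimeter is the number of rows plus the number of columns. Its southeast boundary, traversed from the northeast corner to the southwest corner, consists of $n$ unit steps, each south or west; south steps correspond to rows and west steps to columns. If the diagram has $c$ columns, the shifted Ferrers diagram is obtained by inserting $c$ new left-justified rows above it, of lengths $c,c-1,\dots,1$ from top to bottom; the rightmost cell of each inserted row is a diagonal cell. A type-B permutation tableau of size $n$ is a filling of a shifted Ferrers diagram of half-perimeter $n$ with $0$'s and $1$'s such that: (1) every column contains at least one $1$; (2) no $0$ has both a $1$ above it in its column and a $1$ to its left in its row; (3) if a diagonal cell contains $0$ then every cell of its row contains $0$. The boundary steps of the shifted diagram are those of the underlying Ferrers diagram. Let $\mathcal{B}_n$ be the set of such tableaux with uniform probability measure $\mathbb{P}_n$ and expectation $\mathbb{E}_n$. *)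

From mathcomp Require Import all_boot all_order all_algebra.
Set Implicit Arguments. Unset Strict Implicit. Unset Printing Implicit Defensive.
Import GRing.Theory Num.Theory.

(* Boundary word w : seq bool of the underlying Ferrers diagram, read from the
   NE corner to the SW corner; [true] = south step (a row), [false] = west step
   (a column).  Steps are indexed 0..n-1 here (step k+1 of the paper is
   [nth false w k]). *)

Definition ncols (w : seq bool) : nat := count negb w.

Definition spos (w : seq bool) : seq nat := [seq k <- iota 0 (size w) | nth false w k].

(* Rows of the shifted diagram, indexed from the top (0-based).
   Rows 0 .. c-1 are the inserted rows: row i has length i+1 (left-justified),
   its diagonal cell is in column i.
   Row c + m is the m-th row of the Ferrers diagram (m-th south step), whose
   length is the number of west steps after that south step. *)
Definition rowlen (w : seq bool) (i : nat) : nat :=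
  if i < ncols w then i.+1
  else count negb (drop (nth 0 (spos w) (i - ncols w)).+1 w).

(* the shifted diagram has c + r = size w rows; cells are (row, column), 0-based *)
Definition in_shape (w : seq bool) (i j : nat) : bool :=
  (i < size w) && (j < rowlen w i).

(* A type-B permutation tableau of size n: a boundary word plus a 0/1 filling
   of the n x n grid which is 0 outside the shifted diagram. *)
Definition Tab (n : nat) : finType :=
  (n.-tuple bool * {ffun 'I_n * 'I_n -> bool})%type.

Definition is_Btableau (n : nat) (t : Tab n) : bool :=
  let w := tval t.1 in
  let f := t.2 in
  [&&
      [forall i : 'I_n, forall j : 'I_n, ~~ in_shape w i j ==> ~~ f (i, j)],
      [forall j : 'I_n, (j < ncols w) ==>
          [exists i : 'I_n, in_shape w i j && f (i, j)]],
      [forall i : 'I_n, forall j : 'I_n, (in_shape w i j && ~~ f (i, j)) ==>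
          ~~ ([exists i' : 'I_n, (i' < i) && f (i', j)] &&
              [exists j' : 'I_n, (j' < j) && f (i, j')])] &
      [forall i : 'I_n, ((i < ncols w) && ~~ f (i, i)) ==>
          [forall j : 'I_n, ~~ f (i, j)]] ].

Definition Btableaux (n : nat) : {set Tab n} := [set t | is_Btableau t].

Definition double_south (w : seq bool) : nat :=
  \sum_(1 <= k < size w) (nth false w k.-1 && nth false w k).

Definition E_unif (n : nat) (X : Tab n -> nat) : rat :=
  (\sum_(t in Btableaux n) (X t)%:R) / (#|Btableaux n|)%:R.

From mathcomp Require Import all_boot all_order all_algebra.
From mathcomp Require Import zify ring.
Set Implicit Arguments. Unset Strict Implicit. Unset Printing Implicit Defensive.
Import GRing.Theory Num.Theory.

(* Call a row of (w, f) free if a 1 may be put in it when a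
   new leftmost column is added, and let nfree w f be the number of free rows.
   The generating polynomial Phi_w(y) = sum_(f valid for w) y ^ nfree w f obeys
     - appending a south step adds an empty, free bottom row:
         Phi_(wS)(y) = y Phi_w(y);
     - appending a west step adds a leftmost column and a top diagonal row; the
       admissible new columns are the nonempty subsets of the free rows plus
       the new top row, and summing over them gives
         Phi_(wW)(y) = sum_f (2y(1+y)^k - y^(k+1)),   k = nfree w f;
   so Phi_(wS)(y) + Phi_(wW)(y) = 2y Phi_w(1+y).  Summing over words of length
   n gives Psi_n(y) = 2^n y(y+1)...(y+n-1), and the sum D_n(y) of Phi_w(y)
   weighted by the number of double south steps of w satisfies a similar
   recursion whose solution is D_(m+2)(y) = 2^m y...(y+m-1) sum_(j<=m) (y+j)^2.
   At y = 1 these count the tableaux and the double south steps, and the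
   quotient is (2n-1)/24. *)

Lemma ltn_lift2 n (p : 'I_n.+1) (i j : 'I_n) : (lift p i < lift p j) = (i < j).
Proof. rewrite /= /bump; case: (leqP p i); case: (leqP p j) => /= h1 h2; lia. Qed.

Lemma forall_lift n (p : 'I_n.+1) (P : pred 'I_n.+1) :
  [forall i, P i] = P p && [forall i : 'I_n, P (lift p i)].
Proof.
apply/forallP/andP => [H|[H1 /forallP H2] i]; first by split => //; apply/forallP.
by case: (unliftP p i) => [j ->|->].
Qed.

Lemma exists_lift n (p : 'I_n.+1) (P : pred 'I_n.+1) :
  [exists i, P i] = P p || [exists i : 'I_n, P (lift p i)].
Proof.
apply/existsP/orP => [[i]|[H|/existsP[i H]]]; last 2 first.
- by exists p.
- by exists (lift p i).
by case: (unliftP p i) => [j ->|->] H; [right; apply/existsP; exists j|left].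
Qed.

Lemma forall_liftE n (p : 'I_n.+1) (P : pred 'I_n.+1) Q1 (Q2 : pred 'I_n) :
  P p = Q1 -> (forall i, P (lift p i) = Q2 i) -> [forall i, P i] = Q1 && [forall i, Q2 i].
Proof. by move=> h1 h2; rewrite (forall_lift p) h1; congr (_ && _); apply: eq_forallb. Qed.

Lemma forall_andb (T : finType) (P Q : pred T) :
  [forall x, P x && Q x] = [forall x, P x] && [forall x, Q x].
Proof.
apply/forallP/andP => [H|[/forallP H1 /forallP H2] x]; last by rewrite H1 H2.
by split; apply/forallP => x; case/andP: (H x).
Qed.

Lemma forall_true (T : finType) : [forall x : T, true] = true.
Proof. by apply/forallP. Qed.

Lemma exists_false (T : finType) : [exists x : T, false] = false.
Proof. by apply/existsP => -[]. Qed.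

Lemma forall2_liftE n (p : 'I_n.+1) (P : 'I_n.+1 -> 'I_n.+1 -> bool) Q1
    (Q2 Q3 : pred 'I_n) (Q4 : 'I_n -> 'I_n -> bool) :
  P p p = Q1 -> (forall j, P p (lift p j) = Q2 j) -> (forall i, P (lift p i) p = Q3 i) ->
  (forall i j, P (lift p i) (lift p j) = Q4 i j) ->
  [forall i, forall j, P i j] =
    [&& Q1, [forall j, Q2 j], [forall i, Q3 i] & [forall i, forall j, Q4 i j]].
Proof.
move=> h1 h2 h3 h4.
rewrite (forall_lift p (fun i => [forall j, P i j])) (forall_lift p (P p)) h1 (eq_forallb h2).
have -> : [forall i, [forall j, P (lift p i) j]] = [forall i, Q3 i && [forall j, Q4 i j]].
  by apply: eq_forallb => i; rewrite (forall_lift p) h3 (eq_forallb (h4 i)).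
by rewrite forall_andb !andbA.
Qed.

(* Proves a boolean identity by case analysis on all of its atoms. *)
Ltac bool_atom b := lazymatch b with
  | true => fail | false => fail | _ && _ => fail | _ || _ => fail
  | ~~ _ => fail | _ ==> _ => fail | _ => idtac end.
Ltac bool_split b := let x := fresh "x" in set x := b; clearbody x; case: x.
Ltac bool_cases := repeat match goal with
  | |- context [ ?b && _ ] => bool_atom b; bool_split b
  | |- context [ _ && ?b ] => bool_atom b; bool_split b
  | |- context [ ?b || _ ] => bool_atom b; bool_split b
  | |- context [ _ || ?b ] => bool_atom b; bool_split b
  | |- context [ ~~ ?b ] => bool_atom b; bool_split b
  | |- context [ ?b ==> _ ] => bool_atom b; bool_split b
  | |- context [ _ ==> ?b ] => bool_atom b; bool_split b
  end.

Definition glue n (p : 'I_n.+1) (a : {ffun 'I_n * 'I_n -> bool})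
    (c : {ffun 'I_n.+1 -> bool}) (r : {ffun 'I_n -> bool}) : {ffun 'I_n.+1 * 'I_n.+1 -> bool} :=
  [ffun ij => match unlift p ij.2 with
              | None => c ij.1
              | Some j => if unlift p ij.1 is Some i then a (i, j) else r j end].

Lemma glue_lift n p a c r (i j : 'I_n) : glue p a c r (lift p i, lift p j) = a (i, j).
Proof. by rewrite ffunE /= !liftK. Qed.
Lemma glue_col n p a c r (i : 'I_n.+1) : glue p a c r (i, p) = c i.
Proof. by rewrite ffunE /= unlift_none. Qed.
Lemma glue_row n p a c r (j : 'I_n) : glue p a c r (p, lift p j) = r j.
Proof. by rewrite ffunE /= liftK unlift_none. Qed.

Lemma sum_glue (R : nmodType) n (p : 'I_n.+1) (G : {ffun 'I_n.+1 * 'I_n.+1 -> bool} -> R) :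
  (\sum_F G F = \sum_a \sum_c \sum_r G (glue p a c r))%R.
Proof.
pose T := ({ffun 'I_n * 'I_n -> bool} * {ffun 'I_n.+1 -> bool} * {ffun 'I_n -> bool})%type.
rewrite (reindex (fun x : T => glue p x.1.1 x.1.2 x.2)) /=.
  rewrite -(pair_bigA _ (fun u v => G (glue p u.1 u.2 v))) /=.
  by rewrite -(pair_bigA _ (fun u v => \sum_r G (glue p u v r))%R).
exists (fun F => ([ffun ij => F (lift p ij.1, lift p ij.2)], [ffun i => F (i, p)],
                  [ffun j => F (p, lift p j)])) => [[[a c] r] _|F _] /=.
  congr (_, _, _); apply/ffunP => x; rewrite ffunE.
  - by case: x => i j; rewrite glue_lift.
  - by rewrite glue_col.
  - by rewrite glue_row.
apply/ffunP => -[i j]; rewrite ffunE /=.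
case: (unliftP p j) => [j' ->|->]; last by rewrite ffunE.
by case: (unliftP p i) => [i' ->|->]; rewrite ffunE.
Qed.

Definition ccons n (b : bool) (c : {ffun 'I_n -> bool}) : {ffun 'I_n.+1 -> bool} :=
  [ffun i => if unlift ord0 i is Some j then c j else b].

Lemma ccons0 n b (c : {ffun 'I_n -> bool}) : ccons b c ord0 = b.
Proof. by rewrite ffunE unlift_none. Qed.
Lemma cconsS n b (c : {ffun 'I_n -> bool}) j : ccons b c (lift ord0 j) = c j.
Proof. by rewrite ffunE liftK. Qed.

Lemma sum_ccons (R : nmodType) n (G : {ffun 'I_n.+1 -> bool} -> R) :
  (\sum_c G c = \sum_b \sum_c' G (ccons b c'))%R.
Proof.
rewrite (reindex (fun x : bool * {ffun 'I_n -> bool} => ccons x.1 x.2)) /=.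
  by rewrite -(pair_bigA _ (fun u v => G (ccons u v))).
exists (fun c => (c ord0, [ffun j => c (lift ord0 j)])) => [[b c] _|c _] /=.
  by rewrite ccons0; congr (_, _); apply/ffunP => j; rewrite ffunE cconsS.
apply/ffunP => i; rewrite ffunE.
by case: (unliftP ord0 i) => [j ->|->] //; rewrite ffunE.
Qed.

Lemma sum_tuple_rcons (R : nmodType) n (G : seq bool -> R) :
  (\sum_(t : n.+1.-tuple bool) G t =
   \sum_(t : n.-tuple bool) (G (rcons t true) + G (rcons t false)))%R.
Proof.
have hb : bijective (fun x : n.-tuple bool * bool => rcons_tuple x.1 x.2).
  apply: inj_card_bij.
    move=> [t1 b1] [t2 b2] /(congr1 val) /= /eqP.
    by rewrite eqseq_rcons => /andP[/eqP h /eqP ->]; congr (_, _); apply: val_inj.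
  by rewrite card_prod !card_tuple card_bool expnS mulnC.
rewrite (reindex _ (onW_bij _ hb)) /= -(pair_bigA _ (fun u v => G (rcons_tuple u v))) /=.
by apply: eq_bigr => t _; rewrite big_bool.
Qed.

Lemma sum_tuple0 (R : nmodType) (G : seq bool -> R) : (\sum_(t : 0.-tuple bool) G t = G [::])%R.
Proof. by rewrite (big_pred1 [tuple]) // => t; apply/esym/eqP; apply: tuple0. Qed.

(* The shape after appending a step: a south step adds an empty bottom row, a
   west step lengthens every row by one and adds a top inserted row of length 1. *)
Lemma ncols_rcons (w : seq bool) b : ncols (rcons w b) = ncols w + ~~ b.
Proof. by rewrite /ncols -cats1 count_cat /= addn0. Qed.

Lemma ncols_le (w : seq bool) : ncols w <= size w.
Proof. exact: count_size. Qed.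

Lemma size_spos (w : seq bool) : size (spos w) = size w - ncols w.
Proof.
rewrite /spos size_filter.
have -> : count (nth false w) (iota 0 (size w)) = count id w.
  by rewrite -{3}(mkseq_nth false w) /mkseq count_map.
by rewrite -(count_predC id w) /ncols addnK.
Qed.

Lemma spos_lt (w : seq bool) k : k < size (spos w) -> nth 0 (spos w) k < size w.
Proof.
move=> hk; have : nth 0 (spos w) k \in spos w by apply: mem_nth.
by rewrite mem_filter mem_iota add0n => /andP[].
Qed.

Lemma spos_rcons (w : seq bool) b :
  spos (rcons w b) = if b then rcons (spos w) (size w) else spos w.
Proof.
rewrite /spos size_rcons -addn1 iotaD add0n cats1 filter_rcons nth_rcons ltnn eqxx.
rewrite (@eq_in_filter _ _ (nth false w)); first by case: b.
by move=> k; rewrite mem_iota add0n => /andP[_ hk]; rewrite nth_rcons hk.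
Qed.

Lemma rowlen_le (w : seq bool) i : rowlen w i <= ncols w.
Proof.
rewrite /rowlen; case: ifP => // _; set k := _.+1.
by rewrite /ncols -[in X in _ <= X](cat_take_drop k w) count_cat leq_addl.
Qed.

Lemma rowlen_south (w : seq bool) i : i < size w -> rowlen (rcons w true) i = rowlen w i.
Proof.
move=> hi; rewrite /rowlen ncols_rcons addn0 spos_rcons; case: ifP => // hc.
have hk : i - ncols w < size (spos w) by rewrite size_spos; lia.
rewrite nth_rcons hk drop_rcons; last exact: spos_lt.
by rewrite -cats1 count_cat /= !addn0.
Qed.

Lemma rowlen_south_last (w : seq bool) : rowlen (rcons w true) (size w) = 0.
Proof.
rewrite /rowlen ncols_rcons addn0 spos_rcons nth_rcons size_spos.
have := ncols_le w; rewrite leq_eqVlt => /orP[/eqP e|hc].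
  by rewrite e ltnn subnn eqxx drop_oversize // size_rcons.
by rewrite ltnNge (ltnW hc) /= ltnn eqxx drop_oversize // size_rcons.
Qed.

Lemma rowlen_west_top (w : seq bool) : rowlen (rcons w false) 0 = 1.
Proof. by rewrite /rowlen ncols_rcons addn1. Qed.

Lemma rowlen_west (w : seq bool) i : i < size w -> rowlen (rcons w false) i.+1 = (rowlen w i).+1.
Proof.
move=> hi; rewrite /rowlen ncols_rcons addn1 ltnS spos_rcons subSS; case: ifP => // hc.
have hk : i - ncols w < size (spos w) by rewrite size_spos; lia.
rewrite drop_rcons; last exact: spos_lt.
by rewrite -cats1 count_cat /= addn1.
Qed.

(* The same facts read on cells: after a south step the new row is ord_max,
   after a west step the new row and column are ord0. *)
Section ShapeStep.
Variables (n : nat) (w : seq bool).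
Hypothesis hw : size w = n.

Lemma shape_south_lift (i j : 'I_n) :
  in_shape (rcons w true) (lift ord_max i) (lift ord_max j) = in_shape w i j.
Proof. by rewrite /in_shape !lift_max size_rcons rowlen_south ?hw ?ltn_ord // ltnS ltnW. Qed.

Lemma shape_south_col (i : 'I_n.+1) : in_shape (rcons w true) i (@ord_max n) = false.
Proof.
apply/negbTE; rewrite /in_shape negb_and; apply/orP; right; rewrite -leqNgt /=.
apply: leq_trans (rowlen_le _ _) _; by rewrite ncols_rcons addn0 -hw ncols_le.
Qed.

Lemma shape_south_row (j : 'I_n.+1) : in_shape (rcons w true) (@ord_max n) j = false.
Proof.
by rewrite /in_shape /=; have := rowlen_south_last w; rewrite hw => ->; rewrite ltn0 andbF.
Qed.

Lemma ncols_south_max : (@ord_max n < ncols (rcons w true)) = false.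
Proof. by rewrite /= ncols_rcons addn0 ltnNge -hw ncols_le. Qed.

Lemma ncols_south_lift (j : 'I_n) : (lift ord_max j < ncols (rcons w true)) = (j < ncols w).
Proof. by rewrite lift_max ncols_rcons addn0. Qed.

Lemma shape_west_lift (i j : 'I_n) :
  in_shape (rcons w false) (lift ord0 i) (lift ord0 j) = in_shape w i j.
Proof. by rewrite /in_shape !lift0 size_rcons rowlen_west hw ?ltn_ord // !ltnS ltn_ord. Qed.

Lemma shape_west_corner : in_shape (rcons w false) (@ord0 n) (@ord0 n) = true.
Proof. by rewrite /in_shape /= rowlen_west_top size_rcons. Qed.

Lemma shape_west_col (i : 'I_n) : in_shape (rcons w false) (lift ord0 i) (@ord0 n) = true.
Proof. by rewrite /in_shape lift0 /= rowlen_west ?hw ?ltn_ord // size_rcons hw ltnS ltn_ord. Qed.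

Lemma shape_west_row (j : 'I_n) : in_shape (rcons w false) (@ord0 n) (lift ord0 j) = false.
Proof. by rewrite /in_shape lift0 /= rowlen_west_top ltnS ltn0 andbF. Qed.

Lemma ncols_west_0 : (@ord0 n < ncols (rcons w false)) = true.
Proof. by rewrite /= ncols_rcons addn1. Qed.

Lemma ncols_west_lift (j : 'I_n) : (lift ord0 j < ncols (rcons w false)) = (j < ncols w).
Proof. by rewrite lift0 ncols_rcons addn1 ltnS. Qed.
End ShapeStep.

Lemma exists_before_max n (g : pred 'I_n.+1) (i : 'I_n) :
  [exists x : 'I_n.+1, (x < lift ord_max i) && g x]
  = [exists x : 'I_n, (x < i) && g (lift ord_max x)].
Proof.
have max_after : (@ord_max n < lift ord_max i) = false by rewrite lift_max /= ltnNge ltnW.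
rewrite (exists_lift ord_max) max_after andFb orFb.
by apply: eq_existsb => x; rewrite ltn_lift2.
Qed.

Lemma exists_before_0 n (g : pred 'I_n.+1) (i : 'I_n) :
  [exists x : 'I_n.+1, (x < lift ord0 i) && g x]
  = g ord0 || [exists x : 'I_n, (x < i) && g (lift ord0 x)].
Proof.
by rewrite (exists_lift ord0); congr (_ || _); apply: eq_existsb => x; rewrite ltn_lift2.
Qed.

Lemma exists_before_ord0 n (g : pred 'I_n.+1) : [exists x : 'I_n.+1, (x < @ord0 n) && g x] = false.
Proof. by apply/existsP => -[x]; rewrite ltn0. Qed.

Definition zero_outside n (w : seq bool) (f : {ffun 'I_n * 'I_n -> bool}) : bool :=
  [forall i : 'I_n, forall j : 'I_n, ~~ in_shape w i j ==> ~~ f (i, j)].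
Definition col_has_one n (w : seq bool) (f : {ffun 'I_n * 'I_n -> bool}) : bool :=
  [forall j : 'I_n, (j < ncols w) ==> [exists i : 'I_n, in_shape w i j && f (i, j)]].
Definition no_bad_zero n (w : seq bool) (f : {ffun 'I_n * 'I_n -> bool}) : bool :=
  [forall i : 'I_n, forall j : 'I_n, (in_shape w i j && ~~ f (i, j)) ==>
     ~~ ([exists i' : 'I_n, (i' < i) && f (i', j)] && [exists j' : 'I_n, (j' < j) && f (i, j')])].
Definition diag_rule n (w : seq bool) (f : {ffun 'I_n * 'I_n -> bool}) : bool :=
  [forall i : 'I_n, ((i < ncols w) && ~~ f (i, i)) ==> [forall j : 'I_n, ~~ f (i, j)]].

Definition valid n (w : seq bool) (f : {ffun 'I_n * 'I_n -> bool}) : bool :=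
  [&& zero_outside w f, col_has_one w f, no_bad_zero w f & diag_rule w f].

Lemma is_Btableau_valid n (t : Tab n) : is_Btableau t = valid (tval t.1) t.2.
Proof. by []. Qed.

(* Row i is free when a 1 may be placed in it in a new leftmost column: it is
   not a zero inserted row, and none of its 0s has a 1 above it (such a 0
   would then have a 1 to its left). *)
Definition free_row n (w : seq bool) (f : {ffun 'I_n * 'I_n -> bool}) (i : 'I_n) : bool :=
  ~~ ((i < ncols w) && ~~ f (i, i)) &&
  [forall j : 'I_n, (in_shape w i j && ~~ f (i, j)) ==> ~~ [exists x : 'I_n, (x < i) && f (x, j)]].

Definition nfree n (w : seq bool) (f : {ffun 'I_n * 'I_n -> bool}) : nat :=
  \sum_(i < n) free_row w f i.

(* Appending a south step: the new bottom row ord_max and the new last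
   column ord_max of the grid lie outside the shape, so they must be empty;
   the new row is free and the other rows keep their status. *)
Section AppendSouth.
Variables (n : nat) (w : seq bool).
Hypothesis hw : size w = n.
Variables (a : {ffun 'I_n * 'I_n -> bool}) (c : {ffun 'I_n.+1 -> bool}) (r : {ffun 'I_n -> bool}).
Local Notation F := (glue ord_max a c r).
Local Notation w' := (rcons w true).

Lemma zero_outside_south :
  zero_outside w' F = [&& zero_outside w a, [forall i, ~~ c i] & [forall j, ~~ r j]].
Proof.
rewrite /zero_outside; erewrite (forall2_liftE (p := @ord_max n)); last first.
- by move=> i j; rewrite (shape_south_lift hw) glue_lift.
- by move=> i; rewrite (shape_south_col hw) glue_col.
- by move=> j; rewrite (shape_south_row hw) glue_row.
- by rewrite (shape_south_col hw) glue_col.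
by rewrite [[forall i, ~~ c i]](forall_lift ord_max); bool_cases.
Qed.

Lemma col_has_one_south : col_has_one w' F = col_has_one w a.
Proof.
rewrite /col_has_one (forall_lift ord_max) (ncols_south_max hw) implyFb andTb.
apply: eq_forallb => j.
rewrite ncols_south_lift (exists_lift ord_max) (shape_south_row hw) andFb orFb.
by congr (_ ==> _); apply: eq_existsb => i; rewrite (shape_south_lift hw) glue_lift.
Qed.

Lemma one_above_south (i j : 'I_n) :
  [exists x : 'I_n.+1, (x < lift ord_max i) && F (x, lift ord_max j)]
  = [exists x : 'I_n, (x < i) && a (x, j)].
Proof. by rewrite exists_before_max; apply: eq_existsb => x; rewrite glue_lift. Qed.

Lemma one_left_south (i j : 'I_n) :
  [exists y : 'I_n.+1, (y < lift ord_max j) && F (lift ord_max i, y)]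
  = [exists y : 'I_n, (y < j) && a (i, y)].
Proof. by rewrite exists_before_max; apply: eq_existsb => y; rewrite glue_lift. Qed.

Lemma no_bad_zero_south : no_bad_zero w' F = no_bad_zero w a.
Proof.
rewrite /no_bad_zero; erewrite (forall2_liftE (p := @ord_max n)); last first.
- by move=> i j; rewrite (shape_south_lift hw) glue_lift one_above_south one_left_south.
- by move=> i; rewrite (shape_south_col hw).
- by move=> j; rewrite (shape_south_row hw).
- by rewrite (shape_south_row hw).
by rewrite /= !forall_true.
Qed.

Lemma diag_rule_south : diag_rule w' F = [forall i : 'I_n, ((i < ncols w) && ~~ a (i, i)) ==>
                         (~~ c (lift ord_max i) && [forall j, ~~ a (i, j)])].
Proof.
rewrite /diag_rule (forall_lift ord_max) (ncols_south_max hw) andFb implyFb andTb.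
apply: eq_forallb => i; rewrite ncols_south_lift glue_lift (forall_lift ord_max) glue_col.
by congr (_ ==> (_ && _)); apply: eq_forallb => j; rewrite glue_lift.
Qed.

Lemma valid_south : valid w' F = [&& valid w a, [forall i, ~~ c i] & [forall j, ~~ r j]].
Proof.
rewrite /valid zero_outside_south col_has_one_south no_bad_zero_south diag_rule_south.
case: (boolP [forall i, ~~ c i]) => hc; last by bool_cases.
have -> : [forall i : 'I_n, ((i < ncols w) && ~~ a (i, i)) ==>
             (~~ c (lift ord_max i) && [forall j, ~~ a (i, j)])] = diag_rule w a.
  by apply: eq_forallb => i; rewrite (forallP hc).
by bool_cases.
Qed.

Lemma nfree_south : nfree w' F = (nfree w a).+1.
Proof.
have max_free : free_row w' F ord_max.
  rewrite /free_row (ncols_south_max hw) /=; apply/forallP => j.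
  by rewrite (shape_south_row hw).
rewrite /nfree (bigD1_ord ord_max) //= max_free add1n; congr _.+1.
apply: eq_bigr => i _; rewrite /free_row ncols_south_lift glue_lift.
rewrite (forall_lift ord_max) (shape_south_col hw) andFb implyFb andTb; congr (_ && _).
by apply: eq_forallb => j; rewrite (shape_south_lift hw) glue_lift one_above_south.
Qed.
End AppendSouth.

(* Appending a west step: the new first column c and the new top row
   (c ord0, then r) are glued at ord0.  The top row has the single cell
   (ord0, ord0), so r must be empty; the new column needs a 1, may only have
   1s in free rows below the top, and a 0 in the new diagonal cell c ord0 is
   allowed.  A row stays free iff it has a 1 in the new column or no 1 of the
   new column above it. *)
Section AppendWest.
Variables (n : nat) (w : seq bool).
Hypothesis hw : size w = n.
Variables (a : {ffun 'I_n * 'I_n -> bool}) (c : {ffun 'I_n.+1 -> bool}) (r : {ffun 'I_n -> bool}).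
Local Notation F := (glue ord0 a c r).
Local Notation w' := (rcons w false).

Lemma one_above_west (i j : 'I_n) :
  [exists x : 'I_n.+1, (x < lift ord0 i) && F (x, lift ord0 j)] =
  r j || [exists x : 'I_n, (x < i) && a (x, j)].
Proof.
by rewrite exists_before_0 glue_row; congr (_ || _); apply: eq_existsb => x; rewrite glue_lift.
Qed.

Lemma one_left_west (i j : 'I_n) :
  [exists y : 'I_n.+1, (y < lift ord0 j) && F (lift ord0 i, y)] =
  c (lift ord0 i) || [exists y : 'I_n, (y < j) && a (i, y)].
Proof.
by rewrite exists_before_0 glue_col; congr (_ || _); apply: eq_existsb => y; rewrite glue_lift.
Qed.

Lemma one_above_west_col (i : 'I_n) :
  [exists x : 'I_n.+1, (x < lift ord0 i) && F (x, ord0)] =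
  c ord0 || [exists x : 'I_n, (x < i) && c (lift ord0 x)].
Proof.
by rewrite exists_before_0 glue_col; congr (_ || _); apply: eq_existsb => x; rewrite glue_col.
Qed.

Lemma zero_outside_west : zero_outside w' F = zero_outside w a && [forall j, ~~ r j].
Proof.
rewrite /zero_outside; erewrite (forall2_liftE (p := @ord0 n)); last first.
- by move=> i j; rewrite (shape_west_lift hw) glue_lift.
- by move=> i; rewrite (shape_west_col hw).
- by move=> j; rewrite shape_west_row glue_row.
- by rewrite shape_west_corner.
by rewrite /= !forall_true; bool_cases.
Qed.

Lemma col_has_one_west : col_has_one w' F = [exists i, c i] && col_has_one w a.
Proof.
rewrite /col_has_one (forall_lift ord0) ncols_west_0 implyTb; congr (_ && _).
  apply: eq_existsb => i; rewrite glue_col.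
  by case: (unliftP ord0 i) => [i' ->|->]; rewrite ?(shape_west_col hw) ?shape_west_corner.
apply: eq_forallb => j; rewrite ncols_west_lift (exists_lift ord0) shape_west_row andFb orFb.
by congr (_ ==> _); apply: eq_existsb => i; rewrite (shape_west_lift hw) glue_lift.
Qed.

Lemma no_bad_zero_west (hr : forall j, r j = false) :
  no_bad_zero w' F = [forall i : 'I_n, forall j : 'I_n, (in_shape w i j && ~~ a (i, j)) ==>
   ~~ ([exists x : 'I_n, (x < i) && a (x, j)] &&
       (c (lift ord0 i) || [exists y : 'I_n, (y < j) && a (i, y)]))].
Proof.
rewrite /no_bad_zero; erewrite (forall2_liftE (p := @ord0 n)); last first.
- by move=> i j; rewrite (shape_west_lift hw) glue_lift one_above_west one_left_west hr orFb.
- by move=> i; rewrite exists_before_ord0 andbF /= implybT.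
- by move=> j; rewrite shape_west_row.
- by rewrite exists_before_ord0 /= implybT.
by rewrite /= !forall_true.
Qed.

Lemma diag_rule_west : diag_rule w' F = (~~ c ord0 ==> [forall j, ~~ r j]) &&
  [forall i : 'I_n, ((i < ncols w) && ~~ a (i, i)) ==>
                    (~~ c (lift ord0 i) && [forall j, ~~ a (i, j)])].
Proof.
rewrite /diag_rule (forall_lift ord0) ncols_west_0 glue_col andTb; congr (_ && _).
  rewrite (forall_lift ord0) glue_col.
  by case: (c ord0); rewrite //=; apply: eq_forallb => j; rewrite glue_row.
apply: eq_forallb => i; rewrite ncols_west_lift glue_lift (forall_lift ord0) glue_col.
by congr (_ ==> (_ && _)); apply: eq_forallb => j; rewrite glue_lift.
Qed.

Lemma no_bad_zero_diag_west :
  [forall i : 'I_n, forall j : 'I_n, (in_shape w i j && ~~ a (i, j)) ==>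
   ~~ ([exists x : 'I_n, (x < i) && a (x, j)] &&
       (c (lift ord0 i) || [exists y : 'I_n, (y < j) && a (i, y)]))] &&
  [forall i : 'I_n, ((i < ncols w) && ~~ a (i, i)) ==>
                    (~~ c (lift ord0 i) && [forall j, ~~ a (i, j)])]
  = [&& no_bad_zero w a, diag_rule w a & [forall i, c (lift ord0 i) ==> free_row w a i]].
Proof.
rewrite /no_bad_zero /diag_rule -!forall_andb; apply: eq_forallb => i /=.
rewrite /free_row; case: (c (lift ord0 i)) => /=; last by rewrite andbT.
under eq_forallb => j do rewrite andbT.
set no_above := [forall j : 'I_n, _ ==> ~~ [exists x : 'I_n, _ && a (x, j)]].
case: (boolP no_above) => hd; last by bool_cases.
have -> : [forall j : 'I_n, in_shape w i j && ~~ a (i, j) ==>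
     ~~ ([exists i' : 'I_n, (i' < i) && a (i', j)] &&
         [exists j' : 'I_n, (j' < j) && a (i, j')])] = true.
  by apply/forallP => j; move: (forallP hd j); bool_cases.
by bool_cases.
Qed.

Lemma valid_west : valid w' F = [&& valid w a, [forall j, ~~ r j], [exists i, c i] &
   [forall i, c (lift ord0 i) ==> free_row w a i]].
Proof.
rewrite /valid zero_outside_west col_has_one_west diag_rule_west.
case: (boolP [forall j, ~~ r j]) => hr; last by bool_cases.
rewrite no_bad_zero_west; last by move=> j; apply: negbTE (forallP hr j).
by rewrite implybT andTb no_bad_zero_diag_west; bool_cases.
Qed.

Lemma nfree_west (hr : forall j, r j = false) : nfree w' F =
  (c ord0 + \sum_(i < n) (free_row w a i && (c (lift ord0 i) ||
        ~~ (c ord0 || [exists x : 'I_n, (x < i) && c (lift ord0 x)]))))%N.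
Proof.
have top_free : free_row w' F ord0 = c ord0.
  rewrite /free_row ncols_west_0 glue_col andTb negbK.
  by case: (c ord0) => //; rewrite andTb; apply/forallP => j; rewrite exists_before_ord0 implybT.
rewrite /nfree (bigD1_ord ord0) //= top_free; congr (_ + _)%N.
apply: eq_bigr => i _; rewrite /free_row ncols_west_lift glue_lift.
erewrite (forall_liftE (p := @ord0 n)); last first.
- by move=> j; rewrite (shape_west_lift hw) glue_lift one_above_west hr orFb.
- by rewrite (shape_west_col hw) glue_col one_above_west_col.
by bool_cases.
Qed.
End AppendWest.

Lemma exists_ccons n b (c : {ffun 'I_n -> bool}) :
  [exists x : 'I_n.+1, ccons b c x] = b || [exists x, c x].
Proof.
by rewrite (exists_lift ord0) ccons0; congr (_ || _); apply: eq_existsb => x; rewrite cconsS.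
Qed.

Lemma exists_before_ccons n b (c : {ffun 'I_n -> bool}) (i : 'I_n) :
  [exists x : 'I_n.+1, (x < lift ord0 i) && ccons b c x] = b || [exists x : 'I_n, (x < i)%N && c x].
Proof.
by rewrite exists_before_0 ccons0; congr (_ || _); apply: eq_existsb => x; rewrite cconsS.
Qed.

Lemma forall_ccons_imply n b (c : {ffun 'I_n -> bool}) (P : pred 'I_n.+1) :
  [forall i, ccons b c i ==> P i] = (b ==> P ord0) && [forall i, c i ==> P (lift ord0 i)].
Proof.
by rewrite (forall_lift ord0) ccons0; congr (_ && _); apply: eq_forallb => x; rewrite cconsS.
Qed.

Definition col0 n : {ffun 'I_n -> bool} := [ffun => false].

Lemma col0E n i : col0 n i = false.
Proof. by rewrite ffunE. Qed.

Lemma col0_eq n (c : {ffun 'I_n -> bool}) : [forall i, ~~ c i] = (c == col0 n).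
Proof.
apply/forallP/eqP => [h|-> i]; last by rewrite col0E.
by apply/ffunP => i; rewrite col0E; apply/negbTE/h.
Qed.

Section ColumnSums.
Variable R : comNzRingType.
Local Open Scope ring_scope.

Lemma sum_cols0 (G : {ffun 'I_0 -> bool} -> R) : \sum_c G c = G (col0 0).
Proof. by rewrite (big_pred1 (col0 0)) // => c /=; apply/esym/eqP/ffunP => -[]. Qed.

Lemma sum_if_mul (T : finType) (P : pred T) (X : T -> R) (k : R) :
  \sum_t (if P t then k * X t else 0) = k * \sum_t (if P t then X t else 0).
Proof. by rewrite big_distrr /=; apply: eq_bigr => t _; case: (P t); rewrite ?mulr0. Qed.

Lemma sum_if_const (T : finType) (C : bool) (X : T -> R) :
  \sum_t (if C then X t else 0) = if C then \sum_t X t else 0.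
Proof. by case: C => //; rewrite big1. Qed.

Lemma sum_empty_col m (G : {ffun 'I_m -> bool} -> R) :
  \sum_(c : {ffun 'I_m -> bool}) (if [forall i, ~~ c i] then G c else 0) = G (col0 m).
Proof.
rewrite -big_mkcond (big_pred1 (col0 m)) // => c /=; exact: col0_eq.
Qed.

Lemma sum_nonempty_col m (G : {ffun 'I_m -> bool} -> R) :
  \sum_(c : {ffun 'I_m -> bool}) (if [exists i, c i] then G c else 0) = \sum_c G c - G (col0 m).
Proof.
rewrite (bigD1 (col0 m)) //= [X in _ = X - _](bigD1 (col0 m)) //=.
rewrite -[[exists i, _]]negbK negb_exists col0_eq eqxx /= add0r addrC addrK.
by apply: eq_bigr => c hc; rewrite -[[exists i, _]]negbK negb_exists col0_eq hc.
Qed.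

Lemma sum_subsets n (P : pred 'I_n) (y : R) :
  \sum_(c : {ffun 'I_n -> bool})
     (if [forall i, c i ==> P i] then y ^+ (\sum_(i < n) (P i && c i))%N else 0)
  = (1 + y) ^+ (\sum_(i < n) P i)%N.
Proof.
elim: n P => [|n IH] P.
  rewrite sum_cols0; have -> : [forall i, col0 0 i ==> P i] by apply/forallP => -[].
  by rewrite !big_ord0 expr0.
rewrite sum_ccons big_bool /=.
have split_count b (c : {ffun 'I_n -> bool}) :
    (\sum_(i < n.+1) (P i && ccons b c i))%N =
    ((P ord0 && b) + \sum_(i < n) (P (lift ord0 i) && c i))%N.
  by rewrite big_ord_recl ccons0; congr (_ + _)%N; apply: eq_bigr => i _; rewrite cconsS.
under eq_bigr => c _ do rewrite forall_ccons_imply split_count.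
under [X in _ + X]eq_bigr => c _ do rewrite forall_ccons_imply split_count.
rewrite big_ord_recl; case: (P ord0) => /=; last by rewrite big1 // add0r IH.
under eq_bigr => c _ do rewrite exprD expr1.
by rewrite sum_if_mul IH add1n exprS; ring.
Qed.

Lemma sum_subsets_first n (P : pred 'I_n) (y : R) :
  \sum_(c : {ffun 'I_n -> bool}) (if [forall i, c i ==> P i] then
      y ^+ (\sum_(i < n) (P i && (c i || ~~ [exists x : 'I_n, (x < i)%N && c x])))%N else 0)
  = y * (1 + y) ^+ (\sum_(i < n) P i)%N - y ^+ (\sum_(i < n) P i)%N.+1
    + y ^+ (\sum_(i < n) P i)%N.
Proof.
elim: n P => [|n IH] P.
  rewrite sum_cols0; have -> : [forall i, col0 0 i ==> P i] by apply/forallP => -[].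
  by rewrite !big_ord0 expr0 expr1 mulr1 subrr add0r.
rewrite sum_ccons big_bool /=.
have count_top_one (c : {ffun 'I_n -> bool}) :
    (\sum_(i < n.+1) (P i && (ccons true c i || ~~ [exists x : 'I_n.+1, (x < i)%N && ccons true c x])))%N
    = (P ord0 + \sum_(i < n) (P (lift ord0 i) && c i))%N.
  rewrite big_ord_recl ccons0 orTb andbT; congr (_ + _)%N.
  by apply: eq_bigr => i _; rewrite cconsS exists_before_ccons orTb orbF.
have count_top_zero (c : {ffun 'I_n -> bool}) :
    (\sum_(i < n.+1) (P i && (ccons false c i || ~~ [exists x : 'I_n.+1, (x < i)%N && ccons false c x])))%N
    = (P ord0 + \sum_(i < n) (P (lift ord0 i) && (c i || ~~ [exists x : 'I_n, (x < i)%N && c x])))%N.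
  rewrite big_ord_recl ccons0 exists_before_ord0 orFb andbT; congr (_ + _)%N.
  by apply: eq_bigr => i _; rewrite cconsS exists_before_ccons orFb.
under eq_bigr => c _ do rewrite forall_ccons_imply count_top_one.
under [X in _ + X]eq_bigr => c _ do rewrite forall_ccons_imply count_top_zero.
rewrite big_ord_recl; case: (P ord0) => /=; last by rewrite big1 // add0r !add0n IH.
under eq_bigr => c _ do rewrite exprD expr1.
under [X in _ + X]eq_bigr => c _ do rewrite exprD expr1.
by rewrite !sum_if_mul sum_subsets IH !add1n !exprS; ring.
Qed.

(* The admissible new first columns after a west step: nonempty, with 1s
   below the top only in the k free rows P.  Weighted by y to the number of
   free rows of the result, they sum to 2y(1+y)^k - y^(k+1). *)
Lemma sum_new_column n (P : pred 'I_n) (y : R) :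
  \sum_(c : {ffun 'I_n.+1 -> bool}) (if [exists i, c i] && [forall i, c (lift ord0 i) ==> P i] then
   y ^+ (c ord0 + \sum_(i < n) (P i && (c (lift ord0 i) ||
          ~~ (c ord0 || [exists x : 'I_n, (x < i)%N && c (lift ord0 x)]))))%N else 0)
  = 2 * y * (1 + y) ^+ (\sum_(i < n) P i)%N - y ^+ (\sum_(i < n) P i)%N.+1.
Proof.
have drop_top b (c : {ffun 'I_n -> bool}) :
    [forall i, ccons b c (lift ord0 i) ==> P i] = [forall i, c i ==> P i].
  by apply: eq_forallb => x; rewrite cconsS.
have top_one (c : {ffun 'I_n -> bool}) :
  (if [exists i, ccons true c i] && [forall i, ccons true c (lift ord0 i) ==> P i] then
   y ^+ (ccons true c ord0 + \sum_(i < n) (P i && (ccons true c (lift ord0 i) ||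
          ~~ (ccons true c ord0 || [exists x : 'I_n, (x < i)%N && ccons true c (lift ord0 x)]))))%N
   else 0)
  = y * (if [forall i, c i ==> P i] then y ^+ (\sum_(i < n) (P i && c i))%N else 0).
  rewrite exists_ccons drop_top ccons0 /=.
  under eq_bigr => i _ do rewrite cconsS orbF.
  by case: [forall i, _]; rewrite ?mulr0 // add1n exprS.
have top_zero (c : {ffun 'I_n -> bool}) :
  (if [exists i, ccons false c i] && [forall i, ccons false c (lift ord0 i) ==> P i] then
   y ^+ (ccons false c ord0 + \sum_(i < n) (P i && (ccons false c (lift ord0 i) ||
          ~~ (ccons false c ord0 || [exists x : 'I_n, (x < i)%N && ccons false c (lift ord0 x)]))))%N
   else 0)
  = if [exists i, c i] then (if [forall i, c i ==> P i] then
      y ^+ (\sum_(i < n) (P i && (c i || ~~ [exists x : 'I_n, (x < i)%N && c x])))%N else 0) else 0.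
  rewrite exists_ccons drop_top ccons0 /=.
  under eq_bigr => i _ do under eq_existsb => x do rewrite cconsS.
  under eq_bigr => i _ do rewrite cconsS.
  by case: [exists i, _]; case: [forall i, _].
rewrite sum_ccons big_bool /=.
rewrite (eq_bigr _ (fun c _ => top_one c)) (eq_bigr _ (fun c _ => top_zero c)).
rewrite -big_distrr /= sum_subsets sum_nonempty_col sum_subsets_first.
have -> : [forall i, col0 n i ==> P i] by apply/forallP => i; rewrite col0E.
under eq_bigr => i _ do under eq_existsb => x do rewrite col0E andbF.
under eq_bigr => i _ do rewrite col0E exists_false andbT.
by ring.
Qed.
End ColumnSums.

Section GeneratingPolynomials.
Variable R : comNzRingType.
Local Open Scope ring_scope.

Definition Phi n (w : seq bool) (y : R) : R :=
  \sum_(f : {ffun 'I_n * 'I_n -> bool}) (if valid w f then y ^+ nfree w f else 0).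

Lemma Phi_south n (w : seq bool) (hw : size w = n) y :
  Phi n.+1 (rcons w true) y = y * Phi n w y.
Proof.
rewrite /Phi (sum_glue ord_max) big_distrr /=; apply: eq_bigr => a _.
have glued c r : (if valid (rcons w true) (glue ord_max a c r)
      then y ^+ nfree (rcons w true) (glue ord_max a c r) else 0) =
    if [forall i, ~~ c i] then (if [forall j, ~~ r j] then
      (if valid w a then y ^+ (nfree w a).+1 else 0) else 0) else 0.
  rewrite (valid_south hw) (nfree_south hw).
  by case: (valid w a); case: [forall i, _]; case: [forall j, _].
rewrite (eq_bigr _ (fun c _ => eq_bigr _ (fun r _ => glued c r))).
under eq_bigr => c _ do rewrite sum_if_const.
by rewrite !sum_empty_col; case: (valid w a); rewrite ?mulr0 // exprS.
Qed.

Lemma Phi_west n (w : seq bool) (hw : size w = n) y : Phi n.+1 (rcons w false) y =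
  \sum_(a : {ffun 'I_n * 'I_n -> bool})
     (if valid w a then 2 * y * (1 + y) ^+ nfree w a - y ^+ (nfree w a).+1 else 0).
Proof.
rewrite /Phi (sum_glue ord0); apply: eq_bigr => a _; rewrite exchange_big /=.
have glued c r : (if valid (rcons w false) (glue ord0 a c r)
      then y ^+ nfree (rcons w false) (glue ord0 a c r) else 0) =
    if [forall j, ~~ r j] then (if valid w a then
      (if [exists i, c i] && [forall i, c (lift ord0 i) ==> free_row w a i]
       then y ^+ nfree (rcons w false) (glue ord0 a c r) else 0) else 0) else 0.
  rewrite (valid_west hw).
  by case: (valid w a); case: [forall j, _]; case: [exists i, _]; case: [forall i, _].
rewrite (eq_bigr _ (fun r _ => eq_bigr _ (fun c _ => glued c r))).
under eq_bigr => r _ do rewrite sum_if_const.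
rewrite sum_empty_col sum_if_const; case: (valid w a) => //.
under eq_bigr => c _ do rewrite (nfree_west hw a c (@col0E n)).
by rewrite sum_new_column.
Qed.

Lemma Phi_step n (w : seq bool) (hw : size w = n) y :
  Phi n.+1 (rcons w true) y + Phi n.+1 (rcons w false) y = 2 * y * Phi n w (1 + y).
Proof.
rewrite (Phi_south hw) (Phi_west hw) /Phi big_distrr -big_split big_distrr /=.
apply: eq_bigr => a _; case: (valid w a); last by rewrite !mulr0 addr0.
by rewrite exprS; ring.
Qed.

Lemma Phi_nil y : Phi 0 [::] y = 1.
Proof.
rewrite /Phi (eq_bigr (fun _ => 1)).
  by rewrite sumr_const card_ffun card_prod card_ord card_bool.
move=> f _; have -> : valid [::] f.
  by apply/and4P; split; apply/forallP => -[].
by rewrite /nfree big_ord0 expr0.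
Qed.
End GeneratingPolynomials.

Lemma double_south_rcons (w : seq bool) b :
  double_south (rcons w b) = double_south w + (b && last false w).
Proof.
rewrite /double_south size_rcons.
case hs: (size w) => [|m].
  by move/size0nil: hs => ->; rewrite !big_geq // andbF.
rewrite big_nat_recr //=; congr (_ + _).
  apply: eq_big_nat => k /andP[hk1 hk2].
  have hk' : k.-1 < size w by rewrite hs; apply: leq_ltn_trans (leq_pred k) hk2.
  by rewrite !nth_rcons hs hk2 -hs hk'.
by rewrite !nth_rcons hs ltnn eqxx /= leqnn andbC -(nth_last false w) hs.
Qed.

Section WordSums.
Variable R : comNzRingType.
Local Open Scope ring_scope.

Definition Psi n (y : R) : R := \sum_(t : n.-tuple bool) Phi n t y.
Definition Dsum n (y : R) : R := \sum_(t : n.-tuple bool) (double_south t)%:R * Phi n t y.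
Definition Lsum n (y : R) : R := \sum_(t : n.-tuple bool) (if last false t then Phi n t y else 0).

(* The recursions obtained by summing Phi_step over words; the new double
   south steps come from the words ending south followed by a south step. *)
Lemma Psi_step n y : Psi n.+1 y = 2 * y * Psi n (1 + y).
Proof.
rewrite /Psi (@sum_tuple_rcons _ n (fun s => Phi n.+1 s y)) big_distrr /=; apply: eq_bigr => t _.
by rewrite Phi_step // size_tuple.
Qed.

Lemma Lsum_step n y : Lsum n.+1 y = y * Psi n y.
Proof.
rewrite /Lsum /Psi (@sum_tuple_rcons _ n (fun s => if last false s then Phi n.+1 s y else 0)).
rewrite big_distrr /=; apply: eq_bigr => t _.
by rewrite !last_rcons addr0 Phi_south // size_tuple.
Qed.

Lemma Dsum_step n y : Dsum n.+1 y = 2 * y * Dsum n (1 + y) + y * Lsum n y.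
Proof.
rewrite /Dsum /Lsum (@sum_tuple_rcons _ n (fun s => (double_south s)%:R * Phi n.+1 s y)).
rewrite !big_distrr -big_split /=; apply: eq_bigr => t _.
rewrite !double_south_rcons /= addn0 (mulrCA (2 * y)) -(Phi_step (size_tuple t)).
by rewrite (Phi_south (size_tuple t)) natrD; case: (last false t) => /=; ring.
Qed.

Definition rising (y : R) k : R := \prod_(i < k) (y + i%:R).

Lemma rising_step y k : rising y k.+1 = y * rising (1 + y) k.
Proof.
rewrite /rising big_ord_recl /= addr0; congr (_ * _); apply: eq_bigr => i _.
by rewrite /bump /= add1n -addn1 natrD; ring.
Qed.

Lemma Psi_closed n y : Psi n y = 2 ^+ n * rising y n.
Proof.
elim: n y => [|n IH] y.
  by rewrite /Psi (@sum_tuple0 _ (fun s => Phi 0 s y)) Phi_nil /rising big_ord0 mulr1.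
by rewrite Psi_step IH rising_step exprS; ring.
Qed.

Lemma Dsum_closed m y :
  Dsum m.+2 y = 2 ^+ m * rising y m * \sum_(j < m.+1) (y + j%:R) ^+ 2.
Proof.
have Dsum_nil z : Dsum 0 z = 0.
  rewrite /Dsum (@sum_tuple0 _ (fun s => (double_south s)%:R * Phi 0 s z)).
  by rewrite /double_south big_geq // mul0r.
have Lsum_nil z : Lsum 0 z = 0.
  by rewrite /Lsum (@sum_tuple0 _ (fun s => if last false s then Phi 0 s z else 0)).
have Psi_nil z : Psi 0 z = 1 by rewrite Psi_closed mul1r /rising big_ord0.
elim: m y => [|m IH] y.
  rewrite !Dsum_step Dsum_nil Lsum_step Lsum_nil Psi_nil /rising big_ord0 big_ord1 addr0.
  by ring.
have shift_squares : \sum_(j < m.+2) (y + j%:R) ^+ 2 =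
    y ^+ 2 + \sum_(j < m.+1) ((1 + y) + j%:R) ^+ 2.
  rewrite big_ord_recl /= addr0; congr (_ + _); apply: eq_bigr => i _.
  by rewrite /bump /= add1n -addn1 natrD; congr (_ ^+ 2); ring.
by rewrite Dsum_step IH Lsum_step Psi_closed rising_step shift_squares exprS; ring.
Qed.

Lemma rising1 k : rising 1 k = (k`!)%:R.
Proof.
elim: k => [|k IH]; first by rewrite /rising big_ord0.
by rewrite /rising big_ord_recr /= -/(rising 1 k) IH factS natrM addrC; ring.
Qed.

Lemma sum_squares k : 6 * \sum_(j < k) (1 + j%:R) ^+ 2 = (k * k.+1 * (2 * k).+1)%:R :> R.
Proof.
elim: k => [|k IH]; first by rewrite big_ord0 mulr0.
rewrite big_ord_recr /= mulrDr IH.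
have -> : (k.+1 * k.+2 * (2 * k.+1).+1 = k * k.+1 * (2 * k).+1 + 6 * (k.+1 * k.+1))%N by lia.
by rewrite natrD (natrM _ 6) (natrM _ k.+1) -natr1; ring.
Qed.
End WordSums.

Section Expectation.
Local Open Scope ring_scope.

Lemma sum_Btableaux n (G : seq bool -> rat) :
  \sum_(t in Btableaux n) G (tval t.1) = \sum_(w : n.-tuple bool) G w * Phi n w 1.
Proof.
rewrite big_mkcond /=.
under eq_bigr => t _ do rewrite inE is_Btableau_valid.
rewrite -(pair_bigA _ (fun (w : n.-tuple bool) (f : {ffun 'I_n * 'I_n -> bool}) =>
   if valid (tval w) f then G (tval w) else 0)) /=.
apply: eq_bigr => w _; rewrite /Phi big_distrr /=; apply: eq_bigr => f _.
by case: (valid (tval w) f); rewrite ?mulr0 // expr1n mulr1.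
Qed.

Lemma card_Btableaux n : (#|Btableaux n|)%:R = 2 ^+ n * (n`!)%:R :> rat.
Proof.
rewrite -sumr_const (@sum_Btableaux n (fun _ => 1)) -(rising1 rat) -Psi_closed.
by apply: eq_bigr => w _; rewrite mul1r.
Qed.

Lemma sum_double_south m :
  \sum_(t in Btableaux m.+2) ((double_south (tval t.1))%:R : rat) =
  2 ^+ m * ((m.+2)`!)%:R * (2 * m + 3)%:R / 6.
Proof.
rewrite (@sum_Btableaux m.+2 (fun w => (double_south w)%:R)) -/(Dsum m.+2 1).
have squares : \sum_(j < m.+1) (1 + j%:R) ^+ 2 = (m.+2 * m.+1 * (2 * m + 3))%:R / 6 :> rat.
  have -> : (m.+2 * m.+1 * (2 * m + 3) = m.+1 * m.+2 * (2 * m.+1).+1)%N by lia.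
  by rewrite -sum_squares; field.
by rewrite Dsum_closed rising1 squares !factS !natrM; field.
Qed.
End Expectation.

Theorem mainTheorem9 (n : nat) (hn : 2 <= n) :
  E_unif (fun t : Tab n => double_south (tval t.1)) =
  ((2 * n - 1)%:R / 24%:R)%R.
Proof.
case: n hn => [|[|m]] // _.
rewrite /E_unif sum_double_south card_Btableaux.
have -> : (2 * m.+2 - 1 = 2 * m + 3)%N by lia.
have fact_neq0 : ((m.+2)`!%:R != 0 :> rat)%R by rewrite pnatr_eq0 -lt0n fact_gt0.
have pow_neq0 : (2 ^+ m != 0 :> rat)%R by rewrite expf_neq0.
by rewrite !exprS; field; rewrite fact_neq0 pow_neq0.
Qed.
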